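(* Let $X$, $Y$, $Z$ be Hausdorff locally convex topological vector spaces with topological duals $X^*$, $Y^*$, $Z^*$, and let $C\subseteq Z$ be a closed convex cone with $0\in C\neq Z$. Let $f:X\times Y\to\mathcal{F}(Z,C)$ be a convex function such that $(x_0,0)\in{\rm dom\,} f$ for some $x_0\in X$. Suppose that for every $z^*\in C^-\setminus\{0\}$ the extended real-valued function $y\mapsto\varphi_{(f(x_0,\cdot),z^* )}(y)=\inf_{z\in f(x_0,y)}(-z^*(z))$ is upper semicontinuous at $0\in Y$. Then \[ f_X(0)=\bigcap_{(y^*,z^* )\in Y^*\times (C^-\setminus\{0\})}(-f^* )((0,y^* ),z^* ), \] and there exists a family $\{y^*_{z^*}\colon z^*\in C^-\setminus\{0\},\ \varphi_{(f,z^* )}\text{ is proper}\}\subseteq Y^*$ such that \[ f_X(0)=\bigcap_{\substack{z^*\in C^-\setminus\{0\}\\ \varphi_{(f,z^* )}\text{ is proper}}}(-f^* )((0,y^*_{z^*}),z^* ). \]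
   Context: $\mathcal{F}(Z,C)=\{A\subseteq Z\colon A=\operatorname{cl}(A+C)\}$ (the empty set is included). $C^-=\{z^*\in Z^*\colon z^*(z)\le 0\ \forall z\in C\}$. A function $g:W\to\mathcal{F}(Z,C)$ on a vector space $W$ is convex iff $t g(w_1)+(1-t)g(w_2)\subseteq g(tw_1+(1-t)w_2)$ for all $w_1,w_2\in W$, $t\in(0,1)$ (equivalently, its graph $\{(w,z)\colon z\in g(w)\}$ is convex). ${\rm dom\,} g=\{w\colon g(w)\neq\emptyset\}$. For $z^*\in Z^*$ the scalarization is $\varphi_{(g,z^* )}(w)=\inf_{z\in g(w)}(-z^*(z))\in\mathbb{R}\cup\{\pm\infty\}$ (with $\inf\emptyset=+\infty$); in particular $\varphi_{(f,z^* )}:X\times Y\to\overline{\mathbb{R}}$, and it is proper iff it never takes the value $-\infty$ and is not identically $+\infty$. The marginal function is $f_X(y)=\operatorname{cl}\bigcup_{x\in X}f(x,y)$. The negative conjugate of $f$ is defined for $(x^*,y^* )\in X^*\times Y^*$, $z^*\in C^-\setminus\{0\}$ by $(-f^* )((x^*,y^* ),z^* )=\operatorname{cl}\bigcup_{(x,y)\in X\times Y}\big(f(x,y)+S_{((x^*,y^* ),z^* )}(-x,-y)\big)$, where $S_{((x^*,y^* ),z^* )}(x,y)=\{z\in Z\colon x^*(x)+y^*(y)+z^*(z)\le 0\}$. *)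

From HB Require Import structures.
From mathcomp Require Import all_boot all_order all_algebra.
From mathcomp Require Import all_classical all_reals all_analysis.
Set Implicit Arguments. Unset Strict Implicit. Unset Printing Implicit Defensive.
Import Order.TTheory GRing.Theory Num.Theory.
Import numFieldTopology.Exports numFieldNormedType.Exports.
Local Open Scope classical_set_scope.
Local Open Scope ring_scope.

Definition is_dual (R : realType) (E : tvsType R) (l : E -> R) : Prop :=
  (forall (a : R) (u v : E), l (a *: u + v) = a * l u + l v) /\ continuous l.

Definition msum (R : realType) (E : tvsType R) (A B : set E) : set E :=
  [set a + b | a in A & b in B].

Definition closed_convex_cone (R : realType) (Z : tvsType R) (C : set Z) : Prop :=
  closed C /\ C 0 /\ (forall (t : R) z, 0 <= t -> C z -> C (t *: z)) /\
  (forall (t : R) z1 z2, 0 <= t <= 1 -> C z1 -> C z2 -> C (t *: z1 + (1 - t) *: z2)).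

Definition in_FZC (R : realType) (Z : tvsType R) (C : set Z) (A : set Z) : Prop :=
  A = closure (msum A C).

Definition setfun_convex (R : realType) (W Z : tvsType R) (g : W -> set Z) : Prop :=
  forall (w1 w2 : W) (t : R), 0 < t < 1 ->
    [set t *: z1 + (1 - t) *: z2 | z1 in g w1 & z2 in g w2]
      `<=` g (t *: w1 + (1 - t) *: w2).

Definition sdom (R : realType) (W Z : tvsType R) (g : W -> set Z) : set W :=
  [set w | g w !=set0].

Definition in_Cminus0 (R : realType) (Z : tvsType R) (C : set Z) (zs : Z -> R) : Prop :=
  is_dual zs /\ (forall z, C z -> zs z <= 0) /\ zs <> (fun _ => 0).

Definition scalarization (R : realType) (W Z : tvsType R) (g : W -> set Z)
  (zs : Z -> R) (w : W) : extended R :=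
  ereal_inf [set (- zs z)%:E | z in g w].

Definition usc_at (R : realType) (T : topologicalType) (h : T -> extended R) (x : T) : Prop :=
  forall a : R, (h x < a%:E)%E -> exists2 V, nbhs x V & forall y, V y -> (h y < a%:E)%E.

Definition eproper (R : realType) (T : Type) (h : T -> extended R) : Prop :=
  (forall w, h w <> -oo%E) /\ (exists w, h w <> +oo%E).

Definition marginalX (R : realType) (X Y Z : tvsType R) (f : X * Y -> set Z) (y : Y) : set Z :=
  closure (\bigcup_(x in [set: X]) f (x, y)).

Definition Shalf (R : realType) (X Y Z : tvsType R)
  (xs : X -> R) (ys : Y -> R) (zs : Z -> R) (x : X) (y : Y) : set Z :=
  [set z | xs x + ys y + zs z <= 0].

Definition negconj (R : realType) (X Y Z : tvsType R) (f : X * Y -> set Z)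
  (xs : X -> R) (ys : Y -> R) (zs : Z -> R) : set Z :=
  closure (\bigcup_(p in [set: X * Y])
             msum (f p) (Shalf xs ys zs (- p.1) (- p.2))).

From HB Require Import structures.
From mathcomp Require Import all_boot all_order all_algebra.
From mathcomp Require Import all_classical all_reals all_analysis.
From mathcomp Require Import ring lra.
Import Order.TTheory GRing.Theory Num.Theory.
Import numFieldTopology.Exports numFieldNormedType.Exports.
Local Open Scope classical_set_scope.
Local Open Scope ring_scope.
Set Implicit Arguments. Unset Strict Implicit.

(* The marginal f_X(0) is the closure of the convex set M = U_x f(x,0). A point
   z outside it is strictly separated from M by a continuous functional zs, which
   lies in C^- \ {0} because M + C is contained in M. Upper semicontinuity puts a
   cylinder V x (-oo, a] inside the strict hypograph of the scalarized problem, so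
   separating that hypograph from (0, sup zs(M)) yields a multiplier ys with
   zs(w) + ys(y) <= sup zs(M) for all w in f(x,y). This bounds zs on the negative
   conjugate at ((0, ys), zs), which therefore excludes z, and it makes the
   scalarization of f by zs proper. Separation in a locally convex space is
   obtained from an algebraic Hahn-Banach argument: Zorn's lemma on partial linear
   forms bounded by 1 on an absorbing convex set. *)

Definition linear_form (R : realType) (E : lmodType R) (l : E -> R) : Prop :=
  forall (a : R) (u v : E), l (a *: u + v) = a * l u + l v.

Definition is_convex (R : realType) (E : lmodType R) (A : set E) : Prop :=
  forall x y (t : R), 0 <= t <= 1 -> A x -> A y -> A (t *: x + (1 - t) *: y).

Section LinearForm.
Variables (R : realType) (E : lmodType R) (l : E -> R).
Hypothesis hl : linear_form l.

Lemma linear_form0 : l 0 = 0.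
Proof. by have := hl (-1) 0 0; rewrite scaler0 addr0 mulN1r addNr. Qed.

Lemma linear_formD x y : l (x + y) = l x + l y.
Proof. by rewrite -[x]scale1r hl mul1r scale1r. Qed.

Lemma linear_formZ a x : l (a *: x) = a * l x.
Proof. by rewrite -[a *: x]addr0 hl linear_form0 addr0. Qed.

Lemma linear_formN x : l (- x) = - l x.
Proof. by rewrite -scaleN1r linear_formZ mulN1r. Qed.

Lemma linear_formB x y : l (x - y) = l x - l y.
Proof. by rewrite linear_formD linear_formN. Qed.

End LinearForm.

Section AlgebraicSeparation.
Variables (R : realType) (E : lmodType R) (K : set E) (w : E).
Hypotheses (K_convex : is_convex K)
  (K_absorbing : forall x, exists2 s : R, 0 < s & K (s *: x)) (Kw : ~ K w).

(* Partial linear forms are encoded by their graphs, so that a chain of them is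
   glued together by taking the union. *)
Record admissible (G : set (E * R)) : Prop := Admissible {
  admissible_fun : forall x a b, G (x, a) -> G (x, b) -> a = b;
  admissible_lin : forall t x y a b, G (x, a) -> G (y, b) -> G (t *: x + y, t * a + b);
  admissible_le1 : forall x a, G (x, a) -> K x -> a <= 1;
  admissible_w : G (w, 1) }.

Lemma absorbing0 : K 0.
Proof. by have [s _] := K_absorbing 0; rewrite scaler0. Qed.

Lemma admissible00 G : admissible G -> G (0, 0).
Proof.
move=> [_ Glin _ Gw]; have := Glin (-1) _ _ _ _ Gw Gw.
by rewrite scaleN1r addNr mulN1r addNr.
Qed.

Lemma admissibleZ G t x a : admissible G -> G (x, a) -> G (t *: x, t * a).
Proof.
move=> hG Gx; have := admissible_lin hG t Gx (admissible00 hG).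
by rewrite !addr0.
Qed.

Lemma admissible_line : admissible [set p | exists t, p = (t *: w, t)].
Proof.
have w0 : w != 0 by apply/eqP => w0; apply: Kw; rewrite w0; exact: absorbing0.
split.
- move=> x a b [t [-> ->]] [t' [/eqP + ->]].
  by rewrite -subr_eq0 -scalerBl scaler_eq0 (negPf w0) orbF subr_eq0 => /eqP.
- move=> t x y a b [t1 [-> ->]] [t2 [-> ->]]; exists (t * t1 + t2).
  by rewrite scalerDl scalerA.
- move=> x a [t [-> ->]] Kx; rewrite leNgt; apply/negP => t1.
  have t0 : 0 < t by exact: lt_trans ltr01 t1.
  apply: Kw; have := K_convex (t := t^-1) _ Kx absorbing0.
  rewrite scaler0 addr0 scalerA mulVf ?gt_eqF // scale1r; apply.
  by rewrite invr_ge0 ltW //= invf_le1 // ltW.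
- by exists 1; rewrite scale1r.
Qed.

Lemma admissible_chain (F : set (set (E * R))) :
  F `<=` (fun G => G = set0 \/ admissible G) -> total_on F subset ->
  let U := \bigcup_(G in F) G in U = set0 \/ admissible U.
Proof.
move=> FP Ftot U.
have [[q [G0 FG0 G0q]]|U0] := pselect (U !=set0); last first.
  by left; apply/seteqP; split => // p Up; apply: U0; exists p.
have FA G p : F G -> G p -> admissible G by move=> /FP[->//|].
have common p1 p2 : U p1 -> U p2 -> exists G, [/\ F G, admissible G, G p1 & G p2].
  move=> [G1 FG1 G1p] [G2 FG2 G2p].
  have [s12|s21] := Ftot _ _ FG1 FG2.
  - by exists G2; split => //; [exact: FA FG2 G2p | exact: s12].
  - by exists G1; split => //; [exact: FA FG1 G1p | exact: s21].
right; split.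
- move=> x a b Ua Ub; have [G [_ hG Ga Gb]] := common _ _ Ua Ub.
  exact: admissible_fun hG _ _ _ Ga Gb.
- move=> t x y a b Ua Ub; have [G [FG hG Ga Gb]] := common _ _ Ua Ub.
  by exists G => //; exact: admissible_lin hG _ _ _ _ _ Ga Gb.
- by move=> x a [G FG Ga]; exact: admissible_le1 (FA _ _ FG Ga) _ _ Ga.
- by exists G0 => //; exact: admissible_w (FA _ _ FG0 G0q).
Qed.

Section OneStepExtension.
Variables (A : set (E * R)) (u : E).
Hypotheses (hA : admissible A) (u_new : forall a, ~ A (u, a)).

(* The value alpha at u of an extension must lie between these two sets. *)
Definition lower_slopes := [set r | exists y b s,
  [/\ A (y, b), 0 < s, K (y - s *: u) & r = (b - 1) / s]].
Definition upper_slopes := [set r | exists y b t,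
  [/\ A (y, b), 0 < t, K (y + t *: u) & r = (1 - b) / t]].

Lemma lower_le_upper r1 r2 : lower_slopes r1 -> upper_slopes r2 -> r1 <= r2.
Proof.
move=> [y2 [b2 [s [A2 s0 K2 ->]]]] [y1 [b1 [t [A1 t0 K1 ->]]]].
have st0 : 0 < s + t by rewrite addr_gt0.
pose lam := s / (s + t).
have lam01 : 0 <= lam <= 1.
  by rewrite /lam divr_ge0 ?(ltW s0) ?(ltW st0) //= ler_pdivrMr // mul1r lerDl ltW.
(* The convex combination cancels the u-components. *)
have Kc : K (lam *: y1 + (1 - lam) *: y2).
  have := K_convex lam01 K1 K2; congr K.
  rewrite scalerDr scalerBr !scalerA.
  have -> : (1 - lam) * s = lam * t by rewrite /lam; field; rewrite gt_eqF.
  by rewrite addrACA subrr addr0.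
have := admissible_le1 hA (admissible_lin hA lam A1 (admissibleZ (1 - lam) hA A2)) Kc.
have -> : lam * b1 + (1 - lam) * b2 = (s * b1 + t * b2) / (s + t).
  by rewrite /lam; field; rewrite gt_eqF.
rewrite ler_pdivrMr // mul1r => h.
rewrite ler_pdivrMr // mulrAC ler_pdivlMr //; nra.
Qed.

Lemma lower_slopes_neq0 : lower_slopes !=set0.
Proof.
have [s s0 Ks] := K_absorbing (- u).
exists (- s^-1), 0, 0, s; split => //; first exact: admissible00.
  by rewrite sub0r -scalerN.
by rewrite sub0r mulNr mul1r.
Qed.

Lemma upper_slopes_neq0 : upper_slopes !=set0.
Proof.
have [s s0 Ks] := K_absorbing u.
exists s^-1, 0, 0, s; split => //; first exact: admissible00.
  by rewrite add0r.
by rewrite subr0 mul1r.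
Qed.

Let alpha := sup lower_slopes.

Lemma lower_le_alpha r : lower_slopes r -> r <= alpha.
Proof.
move=> Lr; apply: ub_le_sup => //.
by have [v Uv] := upper_slopes_neq0; exists v => r' Lr'; exact: lower_le_upper.
Qed.

Lemma alpha_le_upper r : upper_slopes r -> alpha <= r.
Proof.
by move=> Ur; apply: ge_sup; [exact: lower_slopes_neq0 | move=> r' /lower_le_upper; apply].
Qed.

Definition extension := [set p | exists y b t, A (y, b) /\ p = (y + t *: u, b + t * alpha)].

Lemma extension_fun x a c : extension (x, a) -> extension (x, c) -> a = c.
Proof.
move=> [y1 [b1 [t1 [A1 [e1 ->]]]]] [y2 [b2 [t2 [A2 [e2 ->]]]]].
have [t12|t12] := eqVneq t1 t2.
  have y12 : y1 = y2 by apply: (addIr (t1 *: u)); rewrite -e1 t12 -e2.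
  by rewrite t12 (admissible_fun hA A1 (_ : A (y1, b2))) // y12.
(* Otherwise u would lie in the domain of A. *)
exfalso; apply: (@u_new ((t1 - t2)^-1 * (-1 * b1 + b2))).
have e : (t1 - t2) *: u = -1 *: y1 + y2.
  by apply: (addrI y1); rewrite scaleN1r addNKr scalerBl addrA -e1 e2 addrK.
have -> : u = (t1 - t2)^-1 *: (-1 *: y1 + y2).
  by rewrite -e scalerA mulVf ?scale1r // subr_eq0.
exact: admissibleZ hA (admissible_lin hA (-1) A1 A2).
Qed.

Lemma extension_le1 x a : extension (x, a) -> K x -> a <= 1.
Proof.
move=> [y [b [t [Ayb [-> ->]]]]] Kx.
case: (ltrgt0P t) => t0.
- have : upper_slopes ((1 - b) / t) by exists y, b, t.
  by move/alpha_le_upper; rewrite ler_pdivlMr // => h; nra.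
- have : lower_slopes ((b - 1) / (- t)).
    by exists y, b, (- t); rewrite oppr_gt0 scaleNr opprK.
  by move/lower_le_alpha; rewrite ler_pdivrMr ?oppr_gt0 // => h; nra.
- move: Kx; rewrite t0 scale0r addr0 mul0r addr0.
  exact: admissible_le1 hA _ _ Ayb.
Qed.

Lemma extension_admissible : admissible extension.
Proof.
split.
- exact: extension_fun.
- move=> t x z a c [y1 [b1 [t1 [A1 [-> ->]]]]] [y2 [b2 [t2 [A2 [-> ->]]]]].
  exists (t *: y1 + y2), (t * b1 + b2), (t * t1 + t2).
  split; first exact: admissible_lin.
  congr pair; last by ring.
  by rewrite scalerDr scalerA scalerDl addrACA.
- exact: extension_le1.
- by exists w, 1, 0; split; [exact: admissible_w | rewrite scale0r addr0 mul0r addr0].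
Qed.

Lemma extension_proper : A `<` extension.
Proof.
split.
  by case=> y b Ayb; exists y, b, 0; rewrite scale0r addr0 mul0r addr0.
move=> /(_ (u, alpha)) Au; apply: (@u_new alpha); apply: Au.
by exists 0, 0, 1; rewrite add0r scale1r mul1r add0r; split => //; exact: admissible00.
Qed.

End OneStepExtension.

Lemma absorbing_convex_separation : exists l : E -> R,
  [/\ linear_form l, forall x, K x -> l x <= 1 & l w = 1].
Proof.
have [A [[A0|hA] Amax]] := Zorn_bigcup admissible_chain.
  exfalso; apply: (Amax _ _ (or_intror admissible_line)).
  by rewrite A0; split => // /(_ (w, 1)); apply; exists 1; rewrite scale1r.
have total x : exists a, A (x, a).
  apply: contrapT => nx; have u_new a : ~ A (x, a) by move=> Axa; apply: nx; exists a.
  exact: Amax _ (extension_proper hA u_new) (or_intror (extension_admissible hA u_new)).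
pose l x := projT1 (cid (total x)).
have Al x : A (x, l x) by rewrite /l; case: cid.
exists l; split.
- by move=> a x y; exact: admissible_fun hA _ _ _ (Al _) (admissible_lin hA a (Al x) (Al y)).
- by move=> x; exact: admissible_le1 hA _ _ (Al x).
- exact: admissible_fun hA _ _ _ (Al w) (admissible_w hA).
Qed.

End AlgebraicSeparation.

Section TvsSeparation.
Variables (R : realType) (E : tvsType R).

Lemma nbhs0_absorbing (V : set E) : nbhs 0 V -> forall x, exists2 s : R, 0 < s & V (s *: x).
Proof.
move=> V0 x.
have := @scale_continuous R E (0, x) V; rewrite /= scale0r => /(_ V0).
case=> -[A B] /= [nA nB] AB.
case/nbhs_ballP: nA => e /= e0 He.
exists (e / 2); first by rewrite divr_gt0.
apply: (AB (e / 2, x)); split => /=; last exact: nbhs_singleton.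
apply: He; rewrite /ball /= sub0r normrN gtr0_norm ?divr_gt0 //.
by rewrite ltr_pdivrMr // ltr_pMr // ltr1n.
Qed.

Lemma nbhs0_convex_subset (N : set E) : nbhs 0 N ->
  exists V, [/\ nbhs 0 V, V `<=` N & is_convex V].
Proof.
move=> N0; have [B Bconv [Bopen Bbasis]] := @locally_convex R E.
have [U [BU U0] UN] := Bbasis 0 N N0.
exists U; split => //; first by apply: open_nbhs_nbhs; split => //; exact: Bopen.
move=> x y t /andP[t0 t1] Ux Uy.
have := Bconv U (mem_set BU) x y (Itv01 t0 t1) (mem_set Ux) (mem_set Uy).
by rewrite inE.
Qed.

Lemma linear_form_continuous (l : E -> R) (V : set E) : linear_form l -> nbhs 0 V ->
  (forall v, V v -> l v <= 1) -> continuous l.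
Proof.
move=> hl V0 lV.
pose W := V `&` (-%R @` V).
have W0 : nbhs 0 W by apply: filterI => //; exact: nbhs0N.
have lW v : W v -> `|l v| <= 1.
  move=> [Vv [v' Vv' ev]]; rewrite ler_norml lV // andbT.
  by rewrite -ev (linear_formN hl) lerNl opprK lV.
move=> x; apply/cvgrPdist_lt => eps eps0.
have e20 : eps / 2 != 0 by rewrite gt_eqF // divr_gt0.
apply: filterS (nbhsT x (nbhs0Z e20 W0)) => _ [_ [v Wv <-] <-] /=.
rewrite (linear_formD hl) (linear_formZ hl) opprD addNKr normrN normrM.
rewrite gtr0_norm ?divr_gt0 //; apply: (le_lt_trans (y := eps / 2)).
  by rewrite ler_piMr ?lW // ltW // divr_gt0.
by rewrite ltr_pdivrMr // ltr_pMr // ltr1n.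
Qed.

Lemma convex_interior_separation (K : set E) (c w : E) (V : set E) :
  is_convex K -> nbhs 0 V -> (forall v, V v -> K (c + v)) -> ~ K w ->
  exists l, [/\ is_dual l, forall k, K k -> l k <= l w & l c < l w].
Proof.
move=> Kc V0 VK Kw.
pose K' := [set x | K (c + x)].
have K'c : is_convex K'.
  move=> x y t t01 Kx Ky; rewrite /K' /=.
  have -> : c + (t *: x + (1 - t) *: y) = t *: (c + x) + (1 - t) *: (c + y).
    by rewrite !scalerDr addrACA -scalerDl [t + _]addrC subrK scale1r.
  exact: Kc.
have K'a x : exists2 s : R, 0 < s & K' (s *: x).
  by have [s s0 Vs] := nbhs0_absorbing V0 x; exists s => //; exact: VK.
have K'w : ~ K' (w - c) by rewrite /K' /= addrC subrK.
have [l [hl lK lw]] := absorbing_convex_separation K'c K'a K'w.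
have lc : continuous l by apply: (linear_form_continuous hl V0) => v /VK /lK.
exists l; split; first by split.
- move=> k Kk; have /lK : K' (k - c) by rewrite /K' /= addrC subrK.
  by rewrite -lw !(linear_formB hl) lerD2r.
- by move: lw; rewrite (linear_formB hl) => lw; lra.
Qed.

Lemma convex_point_strict_separation (A : set E) (a0 z : E) (N : set E) :
  is_convex A -> A a0 -> nbhs z N -> (forall a, A a -> ~ N a) ->
  exists l (d : R), [/\ is_dual l, 0 < d & forall a, A a -> l a <= l z - d].
Proof.
move=> Ac Aa0 Nz AN.
have N'0 : nbhs 0 [set v | N (z + v)].
  have := @nbhsB R E N z (- z) Nz; rewrite addNr.
  by apply: filterS => _ [n Nn <-]; rewrite /= addrA subrr add0r.
have [V [V0 VN Vc]] := nbhs0_convex_subset N'0.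
(* Thicken A by V; z stays outside the thickening, which has interior. *)
pose K := [set k | exists a v, [/\ A a, V v & k = a - v]].
have Kc : is_convex K.
  move=> _ _ t t01 [a1 [v1 [A1 V1 ->]]] [a2 [v2 [A2 V2 ->]]].
  exists (t *: a1 + (1 - t) *: a2), (t *: v1 + (1 - t) *: v2); split.
  - exact: Ac.
  - exact: Vc.
  - by rewrite !scalerBr addrACA -opprD.
have VK v : (-%R @` V) v -> K (a0 + v) by case=> {}v Vv <-; exists a0, v.
have Kz : ~ K z.
  by move=> [a [v [Aa Vv e]]]; apply: (AN a Aa); have := VN v Vv; rewrite /= e subrK.
have [l [ld lK lc]] := convex_interior_separation Kc (nbhs0N V0) VK Kz.
have [s s0 Vs] := nbhs0_absorbing V0 (a0 - z).
have hl : linear_form l by case: ld.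
exists l, (s * (l z - l a0)); split => //; first by rewrite mulr_gt0 // subr_gt0.
move=> a Aa; have /lK : K (a - s *: (a0 - z)) by exists a, (s *: (a0 - z)).
by rewrite (linear_formB hl) (linear_formZ hl) (linear_formB hl) => h; lra.
Qed.

End TvsSeparation.

Lemma is_dual_cst0 (R : realType) (E : tvsType R) : is_dual (fun _ : E => 0 : R).
Proof. by split; [move=> *; rewrite mulr0 addr0 | exact: cst_continuous]. Qed.

Lemma hypograph_separation (R : realType) (Y : tvsType R) (K : set (Y * R^o))
    (V : set Y) (a b : R) :
  is_convex K -> nbhs 0 V -> (forall y (r : R), V y -> r <= a -> K (y, r)) ->
  ~ K (0, b) ->
  exists ys : Y -> R, is_dual ys /\ forall y (r : R), K (y, r) -> r + ys y <= b.
Proof.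
move=> Kc V0 VK Kb.
have ab : a < b.
  by rewrite ltNge; apply/negP => ba; apply: Kb; apply: VK => //; exact: nbhs_singleton.
pose W := [set p : Y * R^o | V p.1 /\ `|p.2| < 1].
have W0 : nbhs (0 : Y * R^o) W.
  exists (V, [set r : R^o | `|r| < 1]) => /=; last by case=> y r [].
  by split => //; apply/nbhs_ballP; exists 1 => //= r; rewrite /ball /= sub0r normrN.
have WK p : W p -> K ((0 : Y, (a - 1 : R^o)) + p).
  case: p => y r [/= Vy]; rewrite ltr_norml => /andP[_ r1].
  apply: VK; rewrite /= ?add0r //; lra.
have [L [[hL Lc] LK Lcw]] := convex_interior_separation Kc W0 WK Kb.
(* Writing L (y, r) = L (y, 0) + r L (0, 1), the slope L (0, 1) is positive. *)
pose lam := L (0, 1).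
have Lyr y (r : R) : L (y, r) = L (y, 0) + r * lam.
  have -> : (y, r : R^o) = r *: ((0 : Y), (1 : R^o)) + (y, 0).
    congr pair => /=; first by rewrite scaler0 add0r.
    by rewrite addr0 [in RHS]/GRing.scale /= mulr1.
  by rewrite hL addrC.
have lam0 : 0 < lam.
  move: Lcw; rewrite Lyr [X in _ < X]Lyr ltrD2l -subr_gt0 -mulrBl.
  by rewrite pmulr_rgt0 // subr_gt0; lra.
exists (fun y => lam^-1 * L (y, 0)); split; first split.
- move=> c u v /=.
  have -> : (c *: u + v, 0 : R^o) = c *: (u, 0 : R^o) + (v, 0).
    by congr pair => /=; rewrite ?scaler0 ?addr0.
  by rewrite hL mulrDr mulrCA.
- move=> y; apply: continuous_comp; last exact: mulrl_continuous.
  apply: (continuous_comp (f := fun y : Y => (y, 0 : R^o))); last exact: Lc.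
  exact: cvg_pair cvg_id (cvg_cst _).
- move=> y r /LK; rewrite Lyr [X in _ <= X]Lyr (linear_form0 hL) add0r => h.
  by rewrite -(ler_pM2r lam0) mulrDl mulrAC mulVf ?gt_eqF // mul1r addrC.
Qed.

Lemma setfun_convex_mem (R : realType) (W Z : tvsType R) (g : W -> set Z) :
  setfun_convex g -> forall w1 w2 z1 z2 (t : R), 0 <= t <= 1 -> g w1 z1 -> g w2 z2 ->
  g (t *: w1 + (1 - t) *: w2) (t *: z1 + (1 - t) *: z2).
Proof.
move=> gc w1 w2 z1 z2 t /andP[t0 t1] g1 g2.
have [->|tn0] := eqVneq t 0; first by rewrite !scale0r !add0r subr0 !scale1r.
have [->|tn1] := eqVneq t 1; first by rewrite !scale1r subrr !scale0r !addr0.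
apply: gc; last by exists z1 => //; exists z2.
by rewrite lt_neqAle eq_sym tn0 t0 /= lt_neqAle tn1 t1.
Qed.

Lemma closure_le_continuous (R : realType) (Z : tvsType R) (l : Z -> R) (A : set Z) (b : R) :
  continuous l -> (forall u, A u -> l u <= b) -> forall u, closure A u -> l u <= b.
Proof.
move=> lc Ab; have cl : closed (l @^-1` [set r | r <= b]).
  by apply: preimage_closed; [move=> x _; exact: lc | exact: closed_le].
rewrite -/(_ `<=` _) [X in _ `<=` X](closure_id _).1 //.
by apply: closureS => v /Ab.
Qed.

Section MarginalDuality.
Variables (R : realType) (X Y Z : tvsType R) (C : set Z) (f : X * Y -> set Z) (x0 : X).
Hypotheses (hC : closed_convex_cone C) (hfF : forall p, in_FZC C (f p))
  (hfconv : setfun_convex f) (hx0 : sdom f (x0, 0))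
  (husc : forall zs : Z -> R, in_Cminus0 C zs ->
     usc_at (scalarization (fun y : Y => f (x0, y)) zs) 0).

Definition slice0 := \bigcup_(x in [set: X]) f (x, 0).

(* ys is a Lagrange multiplier for the constraint y = 0 of the scalarized problem. *)
Definition dual_multiplier (zs : Z -> R) (ys : Y -> R) :=
  is_dual ys /\ forall b, (forall m, slice0 m -> zs m <= b) ->
    forall x y w, f (x, y) w -> zs w + ys y <= b.

Lemma slice0_convex : is_convex slice0.
Proof.
move=> m1 m2 t t01 [x1 _ f1] [x2 _ f2]; exists (t *: x1 + (1 - t) *: x2) => //.
have := setfun_convex_mem hfconv t01 f1 f2; congr (f _ _).
by congr pair => /=; rewrite !scaler0 addr0.
Qed.

Lemma negconj_le (ys : Y -> R) (zs : Z -> R) (b : R) : is_dual ys -> is_dual zs ->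
  (forall x y w, f (x, y) w -> zs w + ys y <= b) ->
  forall u, negconj f (fun _ => 0) ys zs u -> zs u <= b.
Proof.
move=> [yl _] [zl zc] hb; apply: (closure_le_continuous zc).
move=> _ [[x y] _ [w fw [s Ss <-]]].
move: Ss; rewrite /Shalf /= add0r (linear_formN yl) => Ss.
rewrite (linear_formD zl); apply: le_trans (hb _ _ _ fw); rewrite lerD2l; lra.
Qed.

Lemma marginal_sub_negconj (ys : Y -> R) (zs : Z -> R) : is_dual ys -> is_dual zs ->
  marginalX f 0 `<=` negconj f (fun _ => 0) ys zs.
Proof.
move=> [yl _] [zl _]; apply: closureS => m [x _ fm].
exists (x, 0) => //; exists m => //; exists 0; last by rewrite addr0.
by rewrite /Shalf /= oppr0 (linear_form0 yl) (linear_form0 zl) !addr0.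
Qed.

Lemma in_FZC_addC (A : set Z) m c : in_FZC C A -> A m -> C c -> A (m + c).
Proof. by move=> eA Am Cc; rewrite eA; apply: subset_closure; exists m => //; exists c. Qed.

Lemma marginal_point_separation z : ~ marginalX f 0 z ->
  exists zs (b : R), [/\ in_Cminus0 C zs, forall m, slice0 m -> zs m <= b & b < zs z].
Proof.
move=> nz; have [m0 fm0] := hx0.
have M0m0 : slice0 m0 by exists x0.
have [N Nz NM] : exists2 N, nbhs z N & forall m, slice0 m -> ~ N m.
  apply: contrapT => h; apply: nz => N Nz; apply: contrapT => nN.
  by apply: h; exists N => // m Mm Nm; apply: nN; exists m.
have [l [d [[hl lc] d0 lb]]] := convex_point_strict_separation slice0_convex M0m0 Nz NM.
exists l, (l z - d); split => //; last by rewrite ltrBlDr ltrDl.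
split; [by split | split].
- (* If l c > 0, l is unbounded on the ray m0 + t c, which stays in slice0. *)
  move=> c Cc; rewrite leNgt; apply/negP => lc0.
  case: hC => _ [_ [Ccone _]].
  pose t := (l z - d - l m0 + 1) / l c.
  have t0 : 0 <= t by apply: divr_ge0; [have := lb _ M0m0; lra | exact: ltW].
  have /lb : slice0 (m0 + t *: c) by exists x0 => //; apply: in_FZC_addC; last exact: Ccone.
  by rewrite (linear_formD hl) (linear_formZ hl) /t divfK ?gt_eqF //; lra.
- by move=> l0; have := lb _ M0m0; rewrite l0; lra.
Qed.

Definition hypograph (zs : Z -> R) :=
  [set p : Y * R^o | exists x w, f (x, p.1) w /\ p.2 < zs w].

Lemma hypograph_convex zs : linear_form zs -> is_convex (hypograph zs).
Proof.
move=> zl p1 p2 t /[dup] t01 /andP[t0 t1] [x1 [w1 [f1 r1]]] [x2 [w2 [f2 r2]]].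
exists (t *: x1 + (1 - t) *: x2), (t *: w1 + (1 - t) *: w2); split.
  exact: (setfun_convex_mem hfconv t01 f1 f2).
rewrite zl (linear_formZ zl) /=.
change (t * p1.2 + (1 - t) * p2.2 < t * zs w1 + (1 - t) * zs w2).
have [->|tp] := eqVneq t 0; first by rewrite !mul0r !add0r subr0 !mul1r.
apply: ltr_leD; first by rewrite ltr_pM2l // lt_neqAle eq_sym tp t0.
by apply: ler_wpM2l; [rewrite subr_ge0 | exact: ltW].
Qed.

Lemma hypograph_nbhs zs : in_Cminus0 C zs ->
  exists V (a : R), nbhs 0 V /\ forall y (r : R), V y -> r <= a -> hypograph zs (y, r).
Proof.
move=> hz; have [m0 fm0] := hx0.
have [|V V0 HV] := husc hz (a := - zs m0 + 1).
  apply: (le_lt_trans (y := (- zs m0)%:E)); first by apply: ereal_inf_lbound; exists m0.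
  by rewrite lte_fin ltrDl.
exists V, (zs m0 - 1); split => // y r Vy ra.
have [_ [w fw <-]] := ereal_inf_lt (HV y Vy); rewrite lte_fin => hw.
by exists x0, w; split => //=; lra.
Qed.

Lemma dual_multiplier_exists zs : in_Cminus0 C zs -> exists ys, dual_multiplier zs ys.
Proof.
move=> hz; have [[zl _] _] := hz.
have [[b0 hb0]|nb] := pselect (exists b, forall m, slice0 m -> zs m <= b); last first.
  by exists (fun _ => 0); split => [|b hb]; [exact: is_dual_cst0 | case: nb; exists b].
have [m0 fm0] := hx0.
pose S := zs @` slice0.
have S0 : S !=set0 by exists (zs m0); exists m0 => //; exists x0.
have Sub : has_ubound S by exists b0 => _ [m Mm <-]; exact: hb0.
have Kb : ~ hypograph zs (0, sup S).
  move=> [x [w [fw /=]]]; apply/negP; rewrite -leNgt.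
  by apply: ub_le_sup => //; exists w => //; exists x.
have [V [a [V0 VK]]] := hypograph_nbhs hz.
have [ys [hys Hys]] := hypograph_separation (hypograph_convex zl) V0 VK Kb.
exists ys; split => // b hb x y w fw.
apply: le_trans (_ : sup S <= b); last by apply: ge_sup => // _ [m Mm <-]; exact: hb.
apply/ler_addgt0Pr => e e0.
have : hypograph zs (y, zs w - e) by exists x, w; split => //=; lra.
by move/Hys; lra.
Qed.

Lemma scalarization_proper zs ys b : dual_multiplier zs ys ->
  (forall m, slice0 m -> zs m <= b) -> eproper (scalarization f zs).
Proof.
move=> [_ hys] hb; split.
- move=> [x y]; apply/eqP; rewrite -ltNye; apply: (@lt_le_trans _ _ (ys y - b)%:E).
    exact: ltNyr.
  apply/ereal_infP => _ [w fw <-]; rewrite lee_fin.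
  by have := hys b hb x y w fw; lra.
- have [m0 fm0] := hx0; exists (x0, 0); apply/eqP; rewrite -ltey.
  apply: (@le_lt_trans _ _ (- zs m0)%:E); last exact: ltry.
  by apply: ereal_inf_lbound; exists m0.
Qed.

Lemma marginal_dual_separation (yfam : (Z -> R) -> Y -> R) :
  (forall zs, in_Cminus0 C zs -> dual_multiplier zs (yfam zs)) ->
  forall z, ~ marginalX f 0 z -> exists zs, [/\ in_Cminus0 C zs,
    eproper (scalarization f zs) & ~ negconj f (fun _ => 0) (yfam zs) zs z].
Proof.
move=> hyfam z /marginal_point_separation[zs [b [hzs hb bz]]].
have [ys_dual hys] := hyfam zs hzs.
exists zs; split => //; first exact: scalarization_proper (hyfam zs hzs) hb.
by move/(negconj_le ys_dual hzs.1 (hys b hb)); rewrite leNgt bz.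
Qed.

End MarginalDuality.

Theorem mainTheorem1 (R : realType) (X Y Z : tvsType R)
  (hX : hausdorff_space X) (hY : hausdorff_space Y) (hZ : hausdorff_space Z)
  (C : set Z) (hC : closed_convex_cone C) (hCZ : C <> [set: Z])
  (f : X * Y -> set Z) (hfF : forall p, in_FZC C (f p))
  (hfconv : setfun_convex f)
  (x0 : X) (hx0 : sdom f (x0, 0))
  (husc : forall zs : Z -> R, in_Cminus0 C zs ->
     usc_at (scalarization (fun y : Y => f (x0, y)) zs) 0) :
  marginalX f 0 =
    [set z | forall (ys : Y -> R) (zs : Z -> R), is_dual ys -> in_Cminus0 C zs ->
       negconj f (fun _ => 0) ys zs z]
  /\
  exists yfam : (Z -> R) -> (Y -> R),
    (forall zs, in_Cminus0 C zs -> eproper (scalarization f zs) -> is_dual (yfam zs)) /\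
    marginalX f 0 =
      [set z | forall zs : Z -> R, in_Cminus0 C zs -> eproper (scalarization f zs) ->
         negconj f (fun _ => 0) (yfam zs) zs z].
Proof.
have /choice[yfam hyfam] :
    forall zs, exists ys, in_Cminus0 C zs -> dual_multiplier f zs ys.
  move=> zs; have [hzs|nzs] := pselect (in_Cminus0 C zs); last by exists (fun _ => 0).
  by have [ys ?] := dual_multiplier_exists hfconv hx0 husc hzs; exists ys.
have separate := marginal_dual_separation hC hfF hfconv hx0 hyfam.
split.
- apply/seteqP; split => z.
  + by move=> mz ys zs hys [hzs _]; exact: marginal_sub_negconj hys hzs _ mz.
  + move=> H; apply: contrapT => /separate[zs [hzs _]]; apply.
    by apply: H => //; exact: (hyfam zs hzs).1.
- exists yfam; split; first by move=> zs /hyfam[].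
  apply/seteqP; split => z.
  + by move=> mz zs hzs _; exact: marginal_sub_negconj (hyfam zs hzs).1 hzs.1 _ mz.
  + by move=> H; apply: contrapT => /separate[zs [hzs hp]]; apply; exact: H.
Qed.
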